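(* Suppose $l$ is $(M,m)$-(restricted smooth, restricted strongly concave) on $\Omega_{2k}$. Then for all subsets $\mathsf{S},\mathsf{T}\subseteq[n]$ of size at most $k$, $$\frac{M}{m}f_{\mathsf{S}}(\mathsf{T})\ \ge\ \sum_{j\in\mathsf{T}}f_{\mathsf{S}}(j)\ \ge\ \frac{m}{M}f_{\mathsf{S}}(\mathsf{T}).$$
   Context: $\Omega_r=\{(\mathbf{x},\mathbf{y})\in\mathbb{R}^n\times\mathbb{R}^n:\|\mathbf{x}\|_0\le r,\|\mathbf{y}\|_0\le r,\|\mathbf{x}-\mathbf{y}\|_0\le r\}$. A differentiable $l:\mathbb{R}^n\to\mathbb{R}$ is $(M,m)$-(restricted smooth, restricted strongly concave) on $\Omega_r$ if for all $(\mathbf{x},\mathbf{y})\in\Omega_r$: $-\tfrac{m}{2}\|\mathbf{y}-\mathbf{x}\|_2^2\ge l(\mathbf{y})-l(\mathbf{x})-\langle\nabla l(\mathbf{x}),\mathbf{y}-\mathbf{x}\rangle\ge -\tfrac{M}{2}\|\mathbf{y}-\mathbf{x}\|_2^2$, with $m,M>0$. For $\mathsf{S}\subseteq[n]$, $\boldsymbol\beta^{(\mathsf{S})}$ is a maximizer of $l$ over vectors supported in $\mathsf{S}$, $f(\mathsf{S})=l(\boldsymbol\beta^{(\mathsf{S})})-l(\mathbf{0})$, $f_{\mathsf{S}}(\mathsf{T})=f(\mathsf{S}\cup\mathsf{T})-f(\mathsf{S})$ and $f_{\mathsf{S}}(j)=f_{\mathsf{S}}(\{j\})$. *)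

From HB Require Import structures.
From mathcomp Require Import all_boot all_order all_algebra.
From mathcomp Require Import all_classical all_reals topology normedtype derive.
Set Implicit Arguments. Unset Strict Implicit. Unset Printing Implicit Defensive.
Import Order.TTheory GRing.Theory Num.Theory.
Import numFieldNormedType.Exports.
Local Open Scope ring_scope.

Definition l0norm (R : realType) (n : nat) (x : 'rV[R]_n) : nat :=
  #|[set i : 'I_n | x ord0 i != 0]|.

Definition sqnorm2 (R : realType) (n : nat) (x : 'rV[R]_n) : R :=
  \sum_(i < n) (x ord0 i) ^+ 2.

Definition Omega (R : realType) (n r : nat) (x y : 'rV[R]_n) : Prop :=
  [/\ (l0norm x <= r)%N, (l0norm y <= r)%N & (l0norm (x - y) <= r)%N].

(* (M,m)-(restricted smooth, restricted strongly concave) on Omega_r.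
   <grad l(x), y - x> is written as the (Frechet) differential 'd l x (y - x). *)
Definition RSSC (R : realType) (n : nat) (l : 'rV[R]_n -> R) (M m : R) (r : nat)
  : Prop :=
  [/\ 0 < m, 0 < M &
   forall x y : 'rV[R]_n, Omega r x y ->
     - (m / 2) * sqnorm2 (y - x) >= l y - l x - 'd l x (y - x) /\
     l y - l x - 'd l x (y - x) >= - (M / 2) * sqnorm2 (y - x)].

Definition supported_in (R : realType) (n : nat) (S : {set 'I_n}) (x : 'rV[R]_n)
  : Prop := forall i : 'I_n, i \notin S -> x ord0 i = 0.

Definition is_maximizer (R : realType) (n : nat) (l : 'rV[R]_n -> R)
  (S : {set 'I_n}) (b : 'rV[R]_n) : Prop :=
  supported_in S b /\ forall x, supported_in S x -> l x <= l b.

Definition fset (R : realType) (n : nat) (l : 'rV[R]_n -> R)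
  (beta : {set 'I_n} -> 'rV[R]_n) (S : {set 'I_n}) : R :=
  l (beta S) - l 0.

Definition fmarg (R : realType) (n : nat) (l : 'rV[R]_n -> R)
  (beta : {set 'I_n} -> 'rV[R]_n) (S T : {set 'I_n}) : R :=
  fset l beta (S :|: T) - fset l beta S.

From HB Require Import structures.
From mathcomp Require Import all_boot all_order all_algebra.
From mathcomp Require Import all_classical all_reals topology normedtype derive.
From mathcomp Require Import ring lra.
Import Order.TTheory GRing.Theory Num.Theory.
Import numFieldNormedType.Exports.
Set Implicit Arguments. Unset Strict Implicit.
Local Open Scope ring_scope.

(* Write g for the gradient of l at x := beta(S).  Optimality of x on S
   kills g on S.  For |U| <= k, smoothness applied to the ascent step x + g_U/M
   (supported in S u U) gives f_S(U) >= |g_U|^2/(2M), and strong concavity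
   between x and beta(S u U) gives f_S(U) <= |g_U|^2/(2m).  Summing the
   singleton bounds over T sandwiches both sides between the same two
   multiples of |g_T|^2, whose ratio is M/m. *)

Section Supports.
Variables (R : realType) (n : nat).
Implicit Types (U V : {set 'I_n}) (x y : 'rV[R]_n).

Definition row_on U (f : 'I_n -> R) : 'rV[R]_n :=
  \row_i (if i \in U then f i else 0).

Lemma row_on_supported U f : supported_in U (row_on U f).
Proof. by move=> i /negPf iU; rewrite mxE iU. Qed.

Lemma sum_row_onM U f (h : 'I_n -> R) :
  \sum_j row_on U f ord0 j * h j = \sum_(j in U) f j * h j.
Proof.
rewrite [RHS]big_mkcond; apply: eq_bigr => j _.
by rewrite mxE; case: (j \in U); rewrite ?mul0r.
Qed.

Lemma sqnorm2_row_on U f : sqnorm2 (row_on U f) = \sum_(j in U) f j ^+ 2.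
Proof.
rewrite [RHS]big_mkcond; apply: eq_bigr => j _.
by rewrite mxE; case: (j \in U); rewrite ?expr0n.
Qed.

Lemma supportedD U x y :
  supported_in U x -> supported_in U y -> supported_in U (x + y).
Proof. by move=> Hx Hy i iU; rewrite mxE Hx // Hy // addr0. Qed.

Lemma supportedB U x y :
  supported_in U x -> supported_in U y -> supported_in U (x - y).
Proof. by move=> Hx Hy i iU; rewrite !mxE Hx // Hy // subr0. Qed.

Lemma supported_sub U V x :
  U \subset V -> supported_in U x -> supported_in V x.
Proof.
by move=> sUV Hx i iV; apply: Hx; apply: contra iV; apply: (fintype.subsetP sUV).
Qed.

Lemma l0norm_supported U x : supported_in U x -> (l0norm x <= #|U|)%N.
Proof.
move=> Hx; apply: subset_leq_card; apply/fintype.subsetP => i; rewrite inE.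
by apply: contraR => /Hx ->.
Qed.

Lemma Omega_supported r U x y :
  (#|U| <= r)%N -> supported_in U x -> supported_in U y -> Omega r x y.
Proof.
move=> Ur Hx Hy; split; apply: leq_trans Ur; apply: l0norm_supported => //.
exact: supportedB.
Qed.

End Supports.

Section RestrictedSmoothConcave.
Variables (R : realType) (n : nat) (l : 'rV[R]_n -> R) (M m : R) (r : nat).
Hypothesis lRSSC : RSSC l M m r.

(* ['d l x] is a linear map by construction, whether or not [l] is
   differentiable at [x]. *)
Definition grad x (j : 'I_n) : R := 'd l x (delta_mx ord0 j).

Lemma diff_gradE x v : 'd l x v = \sum_j v ord0 j * grad x j.
Proof.
rewrite {1}(row_sum_delta v) linear_sum; apply: eq_bigr => j _.
by rewrite linearZ.
Qed.

Lemma RSSC_ascent_step x (U : {set 'I_n}) :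
  Omega r x (x + row_on U (fun j => grad x j / M)) ->
  (\sum_(j in U) grad x j ^+ 2) / (2 * M)
    <= l (x + row_on U (fun j => grad x j / M)) - l x.
Proof.
have [_ M0 H] := lRSSC; move=> /H [_]; rewrite addrAC subrr add0r.
rewrite diff_gradE sum_row_onM sqnorm2_row_on.
suff -> : (\sum_(j in U) grad x j ^+ 2) / (2 * M) =
  \sum_(j in U) grad x j / M * grad x j
  - M / 2 * \sum_(j in U) (grad x j / M) ^+ 2 by lra.
rewrite mulr_suml mulr_sumr -sumrB; apply: eq_bigr => j _.
by field; apply/eqP; lra.
Qed.

(* Coordinatewise, [w g - m w^2 / 2 <= g^2 / (2 m)]; off [U] the term
   [w g - m w^2 / 2] is [<= 0] as soon as [w = 0] or [g = 0]. *)
Lemma RSSC_gain_le x y (U : {set 'I_n}) :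
  Omega r x y ->
  (forall j, j \notin U -> (y - x) ord0 j = 0 \/ grad x j = 0) ->
  l y - l x <= (\sum_(j in U) grad x j ^+ 2) / (2 * m).
Proof.
have [m0 _ H] := lRSSC; move=> /H [+ _] offU; rewrite diff_gradE.
suff : \sum_j (y - x) ord0 j * grad x j - m / 2 * sqnorm2 (y - x)
       <= (\sum_(j in U) grad x j ^+ 2) / (2 * m) by lra.
rewrite /sqnorm2 mulr_sumr -sumrB mulr_suml [X in _ <= X]big_mkcond /=.
apply: ler_sum => j _.
case: ifPn => [_ | /offU [-> | ->]]; last 2 first.
- by rewrite mul0r expr0n /= mulr0 subrr.
- by rewrite mulr0 sub0r oppr_le0 mulr_ge0 ?sqr_ge0 //; lra.
set w := (y - x) ord0 j; rewrite -subr_ge0.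
have -> : grad x j ^+ 2 / (2 * m) - (w * grad x j - m / 2 * w ^+ 2)
        = (grad x j - m * w) ^+ 2 / (2 * m) by field; apply/eqP; lra.
by rewrite divr_ge0 ?sqr_ge0 //; lra.
Qed.

End RestrictedSmoothConcave.

Section MarginalGainBounds.
Variables (R : realType) (n k : nat) (l : 'rV[R]_n -> R) (M m : R).
Variables (beta : {set 'I_n} -> 'rV[R]_n) (S : {set 'I_n}).
Hypothesis lRSSC : RSSC l M m (2 * k).
Hypothesis beta_max :
  forall U : {set 'I_n}, (#|U| <= 2 * k)%N -> is_maximizer l U (beta U).
Hypothesis S_small : (#|S| <= k)%N.

Let g := grad l (beta S).

Lemma card_setU_small (U : {set 'I_n}) : (#|U| <= k)%N -> (#|S :|: U| <= 2 * k)%N.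
Proof.
move=> Uk; apply: leq_trans (leq_card_setU S U) _.
by rewrite mul2n -addnn leq_add.
Qed.

Let S2k : (#|S| <= 2 * k)%N.
Proof. by apply: leq_trans S_small _; rewrite leq_pmull. Qed.

Lemma beta_supported_setU (U : {set 'I_n}) : supported_in (S :|: U) (beta S).
Proof. by apply: supported_sub (finset.subsetUl S U) _; case: (beta_max S2k). Qed.

Lemma grad_beta_eq0 j : j \in S -> g j = 0.
Proof.
move=> jS; have [_ M0 _] := lRSSC.
have [bS bmax] := beta_max S2k.
set v := row_on [set j] (fun i => g i / M).
have vS : supported_in S v.
  by apply: supported_sub (row_on_supported _); rewrite finset.sub1set.
have bvS := supportedD bS vS.
have := RSSC_ascent_step lRSSC (Omega_supported S2k bS bvS).
rewrite big_set1 -/g; have := bmax _ bvS => le_max le_step.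
have : g j ^+ 2 / (2 * M) <= 0 by lra.
rewrite pmulr_lle0 ?invr_gt0 ?pmulr_rgt0 // => g2_le0.
by apply/eqP; rewrite -sqrf_eq0 eq_le g2_le0 sqr_ge0.
Qed.

Lemma fmarg_ge (U : {set 'I_n}) : (#|U| <= k)%N ->
  (\sum_(j in U) g j ^+ 2) / (2 * M) <= fmarg l beta S U.
Proof.
move=> Uk; have SUk := card_setU_small Uk.
have bSU := @beta_supported_setU U.
set v := row_on U (fun i => g i / M).
have vSU : supported_in (S :|: U) v.
  by apply: supported_sub (row_on_supported _); apply: finset.subsetUr.
have bvSU := supportedD bSU vSU.
have := RSSC_ascent_step lRSSC (Omega_supported SUk bSU bvSU).
have [_ bmax] := beta_max SUk; have := bmax _ bvSU.
rewrite /fmarg /fset -/g; lra.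
Qed.

Lemma fmarg_le (U : {set 'I_n}) : (#|U| <= k)%N ->
  fmarg l beta S U <= (\sum_(j in U) g j ^+ 2) / (2 * m).
Proof.
move=> Uk; have SUk := card_setU_small Uk.
have [bSU_SU _] := beta_max SUk.
have bSU := @beta_supported_setU U.
have gain := RSSC_gain_le lRSSC (Omega_supported SUk bSU bSU_SU).
rewrite /fmarg /fset opprB addrA subrK; apply: gain => j jU.
case: (boolP (j \in S)) => jS; first by right; exact: grad_beta_eq0.
left; apply: (supportedB bSU_SU bSU).
by rewrite !inE negb_or jS.
Qed.

Lemma fmarg_bounds (U : {set 'I_n}) : (#|U| <= k)%N ->
  (\sum_(j in U) g j ^+ 2) / (2 * M) <= fmarg l beta S U
  <= (\sum_(j in U) g j ^+ 2) / (2 * m).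
Proof. by move=> Uk; rewrite fmarg_ge ?fmarg_le. Qed.

Lemma sum_fmarg1_bounds (T : {set 'I_n}) : (#|T| <= k)%N ->
  (\sum_(j in T) g j ^+ 2) / (2 * M) <= \sum_(j in T) fmarg l beta S [set j]
  <= (\sum_(j in T) g j ^+ 2) / (2 * m).
Proof.
move=> Tk; rewrite !mulr_suml; apply/andP; split; apply: ler_sum => j jT.
all: have /fmarg_bounds : (#|[set j]| <= k)%N
       by rewrite cards1; apply: leq_trans Tk; rewrite card_gt0; apply/set0Pn; exists j.
all: by rewrite big_set1 => /andP [].
Qed.

End MarginalGainBounds.

Lemma ratio_sandwich (R : realFieldType) (M m G a b : R) :
  0 < m -> 0 < M ->
  G / (2 * M) <= a <= G / (2 * m) -> G / (2 * M) <= b <= G / (2 * m) ->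
  b <= M / m * a /\ m / M * a <= b.
Proof.
move=> m0 M0 /andP [a_ge a_le] /andP [b_ge b_le].
have e1 : M / m * (G / (2 * M)) = G / (2 * m).
  by field; apply/andP; split; apply/eqP; lra.
have e2 : m / M * (G / (2 * m)) = G / (2 * M).
  by field; apply/andP; split; apply/eqP; lra.
have Mm0 : 0 <= M / m by rewrite divr_ge0 // ltW.
have mM0 : 0 <= m / M by rewrite divr_ge0 // ltW.
split.
- by have := ler_wpM2l Mm0 a_ge; lra.
- by have := ler_wpM2l mM0 a_le; lra.
Qed.

Unset Implicit Arguments. Set Strict Implicit.

Theorem mainTheorem4 (R : realType) (n k : nat) (l : 'rV[R]_n -> R) (M m : R)
  (beta : {set 'I_n} -> 'rV[R]_n) :
  (forall x : 'rV[R]_n, differentiable l x) ->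
  RSSC l M m (2 * k) ->
  (forall S : {set 'I_n}, (#|S| <= 2 * k)%N -> is_maximizer l S (beta S)) ->
  forall S T : {set 'I_n}, (#|S| <= k)%N -> (#|T| <= k)%N ->
    M / m * fmarg l beta S T >= \sum_(j in T) fmarg l beta S [set j] /\
    \sum_(j in T) fmarg l beta S [set j] >= m / M * fmarg l beta S T.
Proof.
move=> _ lRSSC beta_max S T Sk Tk.
have [m0 M0 _] := lRSSC.
exact: ratio_sandwich m0 M0 (fmarg_bounds lRSSC beta_max Sk Tk)
                              (sum_fmarg1_bounds lRSSC beta_max Sk Tk).
Qed.
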